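(* Let $t_1,m_1,m_3,m_4\in\mathbb{R}$ with $m_3+im_4\neq 0$. Let $\mathfrak g$ be the real linear span of $E_1=\begin{pmatrix} t_1&2m_3-2im_4&-\frac{i}{2}(t_1m_1+2m_3^2+2m_4^2)&1\\0&0&0&0\\4i&0&2m_1&0\\0&0&0&0\end{pmatrix}$, $E_2=\begin{pmatrix}0&0&0&i\\0&0&0&0\\0&0&0&0\\0&0&0&0\end{pmatrix}$, $E_3=\begin{pmatrix}2m_3&-m_1&0&0\\0&m_3-im_4&0&1\\0&2i&2m_3&0\\0&0&0&0\end{pmatrix}$, $E_4=\begin{pmatrix}2m_4&im_1&0&0\\0&m_4+im_3&0&i\\0&2&2m_4&0\\0&0&0&0\end{pmatrix}$, $E_5=\begin{pmatrix}0&0&0&0\\0&0&0&0\\0&0&0&1\\0&0&0&0\end{pmatrix}$, and let $\mathfrak g^*$ be the real linear span of $E_1^*=\begin{pmatrix} t_1&0&-\frac{i}{2}(t_1m_1+2m_3^2+2m_4^2)&0\\0&0&0&0\\4i&0&2m_1&0\\0&0&0&0\end{pmatrix}$, $E_2^*=\begin{pmatrix}0&0&0&i\\0&0&0&0\\0&0&0&0\\0&0&0&0\end{pmatrix}$, $E_3^*=\mathrm{diag}(2,1,2,0)$, $E_4^*=\mathrm{diag}(0,i,0,0)$, $E_5^*=\begin{pmatrix}0&0&0&0\\0&0&0&0\\0&0&0&1\\0&0&0&0\end{pmatrix}$. Then $\mathfrak g$ and $\mathfrak g^*$ are similar: there is an invertible complex $4\times4$ matrix $C$ with $C^{-1}\mathfrak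 g\,C=\mathfrak g^*$.
   Context: All matrices are complex $4\times 4$; $\mathrm{diag}(a,b,c,d)$ denotes the diagonal matrix with those diagonal entries. *)

From HB Require Import structures.
From mathcomp Require Import all_boot all_order all_algebra.
From mathcomp Require Import complex.
From mathcomp Require Import reals.
Set Implicit Arguments. Unset Strict Implicit. Unset Printing Implicit Defensive.
Import Order.TTheory GRing.Theory Num.Theory.
Local Open Scope ring_scope.
Local Open Scope complex_scope.

Definition mx4 {T : Type} (d : T)
  (a00 a01 a02 a03 a10 a11 a12 a13 a20 a21 a22 a23 a30 a31 a32 a33 : T)
  : 'M[T]_4 :=
  \matrix_(i < 4, j < 4)
    nth d (nth [::] [:: [:: a00; a01; a02; a03]; [:: a10; a11; a12; a13];
                        [:: a20; a21; a22; a23]; [:: a30; a31; a32; a33]] i) j.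

Definition real_span (R : rcfType) (n k : nat) (E : 'I_k -> 'M[R[i]]_n)
  : 'M[R[i]]_n -> Prop :=
  fun A => exists c : 'I_k -> R, A = \sum_(l < k) ((c l)%:C *: E l).

Section Gens.
Variables (R : realType) (t1 m1 m3 m4 : R).
Local Notation "x %:c" := (x%:C : R[i]) (at level 2, format "x %:c").
Let z : R[i] := 0.
Let I : R[i] := 'i.
Let a13 : R[i] := - (I / 2%:R) * (t1 * m1 + 2%:R * m3 ^+ 2 + 2%:R * m4 ^+ 2)%:c.

Definition E1 : 'M[R[i]]_4 := mx4 z
  t1%:c (2%:R * m3%:c - 2%:R * I * m4%:c) a13 1
  z z z z
  (4%:R * I) z (2%:R * m1%:c) z
  z z z z.
Definition E2 : 'M[R[i]]_4 := mx4 z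
  z z z I   z z z z   z z z z   z z z z.
Definition E3 : 'M[R[i]]_4 := mx4 z
  (2%:R * m3%:c) (- m1%:c) z z
  z (m3%:c - I * m4%:c) z 1
  z (2%:R * I) (2%:R * m3%:c) z
  z z z z.
Definition E4 : 'M[R[i]]_4 := mx4 z
  (2%:R * m4%:c) (I * m1%:c) z z
  z (m4%:c + I * m3%:c) z I
  z 2%:R (2%:R * m4%:c) z
  z z z z.
Definition E5 : 'M[R[i]]_4 := mx4 z
  z z z z   z z z z   z z z 1   z z z z.

Definition E1s : 'M[R[i]]_4 := mx4 z
  t1%:c z a13 z
  z z z z
  (4%:R * I) z (2%:R * m1%:c) z
  z z z z.
Definition E2s : 'M[R[i]]_4 := E2.
Definition E3s : 'M[R[i]]_4 := mx4 z
  2%:R z z z   z 1 z z   z z 2%:R z   z z z z.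
Definition E4s : 'M[R[i]]_4 := mx4 z
  z z z z   z I z z   z z z z   z z z z.
Definition E5s : 'M[R[i]]_4 := E5.

Definition gens (k : 'I_5) : 'M[R[i]]_4 :=
  nth E1 [:: E1; E2; E3; E4; E5] k.
Definition gens_star (k : 'I_5) : 'M[R[i]]_4 :=
  nth E1s [:: E1s; E2s; E3s; E4s; E5s] k.
End Gens.

Definition lie_g (R : realType) (t1 m1 m3 m4 : R) := real_span (gens t1 m1 m3 m4).
Definition lie_g_star (R : realType) (t1 m1 m3 m4 : R) :=
  real_span (gens_star t1 m1 m3 m4).

From HB Require Import structures.
From mathcomp Require Import all_boot all_order all_algebra.
From mathcomp Require Import complex.
From mathcomp Require Import reals.
From mathcomp Require Import ring.
Import Order.TTheory GRing.Theory Num.Theory.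
Local Open Scope ring_scope.
Local Open Scope complex_scope.

(* The conjugating matrix is the unipotent matrix [simmx] below; its entries
   involve k = 1 / (m3^2 + m4^2), which is where m3 + i m4 <> 0 is used.  It
   intertwines the generators, E_j C = C (sum_l M_jl E*_l) and
   E*_l C^-1 = C^-1 (sum_j N_lj E_j) for real tables M and N, so conjugation by
   C, being R-linear, maps each real span onto the other. *)

Section RealSpan.
Context {R : rcfType} {n : nat}.

Lemma sub_real_span {k p} {E : 'I_k -> 'M[R[i]]_n} {F : 'I_p -> 'M[R[i]]_n}
    {M : 'I_p -> 'I_k -> R} :
  (forall j, F j = \sum_(l < k) (M j l)%:C *: E l) ->
  forall A, real_span F A -> real_span E A.
Proof.
move=> FE A [c ->]; exists (fun l => \sum_(j < p) c j * M j l).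
under eq_bigr do rewrite FE scaler_sumr.
rewrite exchange_big; apply: eq_bigr => l _.
rewrite rmorph_sum scaler_suml; apply: eq_bigr => j _.
by rewrite scalerA rmorphM.
Qed.

Lemma real_span_mulmx {k p} {P Q : 'M[R[i]]_n} {E : 'I_k -> 'M[R[i]]_n}
    {F : 'I_p -> 'M[R[i]]_n} {M : 'I_k -> 'I_p -> R} :
  (forall j, P *m E j *m Q = \sum_(l < p) (M j l)%:C *: F l) ->
  forall A, real_span E A -> real_span F (P *m A *m Q).
Proof.
move=> PEQ A [c ->]; apply: (sub_real_span PEQ); exists c.
rewrite mulmx_sumr mulmx_suml; apply: eq_bigr => j _.
by rewrite -scalemxAr -scalemxAl.
Qed.

Lemma real_span_similar {k p} {C D : 'M[R[i]]_n} {E : 'I_k -> 'M[R[i]]_n}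
    {F : 'I_p -> 'M[R[i]]_n} {M : 'I_k -> 'I_p -> R} {N : 'I_p -> 'I_k -> R} :
  D *m C = 1%:M ->
  (forall j, E j *m C = C *m \sum_(l < p) (M j l)%:C *: F l) ->
  (forall l, F l *m D = D *m \sum_(j < k) (N l j)%:C *: E j) ->
  forall A, real_span E A <-> real_span F (D *m A *m C).
Proof.
move=> DC EC FD; have CD := mulmx1C DC.
have conjE j : D *m E j *m C = \sum_(l < p) (M j l)%:C *: F l.
  by rewrite -mulmxA EC mulmxA DC mul1mx.
have conjF l : C *m F l *m D = \sum_(j < k) (N l j)%:C *: E j.
  by rewrite -mulmxA FD mulmxA CD mul1mx.
move=> A; split; first exact (real_span_mulmx conjE A).
move=> /(real_span_mulmx conjF).
by rewrite !mulmxA CD mul1mx -mulmxA CD mulmx1.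
Qed.

End RealSpan.

Section Mx4.
Context {T : pzRingType} (d : T).

Local Ltac mx4_entrywise :=
  apply/matrixP => - [[|[|[|[|?]]]] ?] [[|[|[|[|?]]]] ?]; rewrite !mxE.

Lemma mx4_0 : 0 = mx4 d 0 0 0 0 0 0 0 0 0 0 0 0 0 0 0 0.
Proof. by mx4_entrywise. Qed.

Lemma mx4_1 : 1%:M = mx4 d 1 0 0 0 0 1 0 0 0 0 1 0 0 0 0 1.
Proof. by mx4_entrywise. Qed.

Lemma mx4_add a00 a01 a02 a03 a10 a11 a12 a13 a20 a21 a22 a23 a30 a31 a32 a33
    b00 b01 b02 b03 b10 b11 b12 b13 b20 b21 b22 b23 b30 b31 b32 b33 :
  mx4 d a00 a01 a02 a03 a10 a11 a12 a13 a20 a21 a22 a23 a30 a31 a32 a33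
  + mx4 d b00 b01 b02 b03 b10 b11 b12 b13 b20 b21 b22 b23 b30 b31 b32 b33
  = mx4 d (a00 + b00) (a01 + b01) (a02 + b02) (a03 + b03)
          (a10 + b10) (a11 + b11) (a12 + b12) (a13 + b13)
          (a20 + b20) (a21 + b21) (a22 + b22) (a23 + b23)
          (a30 + b30) (a31 + b31) (a32 + b32) (a33 + b33).
Proof. by mx4_entrywise. Qed.

Lemma mx4_scale c a00 a01 a02 a03 a10 a11 a12 a13 a20 a21 a22 a23
    a30 a31 a32 a33 :
  c *: mx4 d a00 a01 a02 a03 a10 a11 a12 a13 a20 a21 a22 a23 a30 a31 a32 a33
  = mx4 d (c * a00) (c * a01) (c * a02) (c * a03)
          (c * a10) (c * a11) (c * a12) (c * a13)
          (c * a20) (c * a21) (c * a22) (c * a23)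
          (c * a30) (c * a31) (c * a32) (c * a33).
Proof. by mx4_entrywise. Qed.

Lemma mx4_mul a00 a01 a02 a03 a10 a11 a12 a13 a20 a21 a22 a23 a30 a31 a32 a33
    b00 b01 b02 b03 b10 b11 b12 b13 b20 b21 b22 b23 b30 b31 b32 b33 :
  mx4 d a00 a01 a02 a03 a10 a11 a12 a13 a20 a21 a22 a23 a30 a31 a32 a33
  *m mx4 d b00 b01 b02 b03 b10 b11 b12 b13 b20 b21 b22 b23 b30 b31 b32 b33
  = mx4 d
    (a00 * b00 + a01 * b10 + a02 * b20 + a03 * b30)
    (a00 * b01 + a01 * b11 + a02 * b21 + a03 * b31)
    (a00 * b02 + a01 * b12 + a02 * b22 + a03 * b32)
    (a00 * b03 + a01 * b13 + a02 * b23 + a03 * b33)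
    (a10 * b00 + a11 * b10 + a12 * b20 + a13 * b30)
    (a10 * b01 + a11 * b11 + a12 * b21 + a13 * b31)
    (a10 * b02 + a11 * b12 + a12 * b22 + a13 * b32)
    (a10 * b03 + a11 * b13 + a12 * b23 + a13 * b33)
    (a20 * b00 + a21 * b10 + a22 * b20 + a23 * b30)
    (a20 * b01 + a21 * b11 + a22 * b21 + a23 * b31)
    (a20 * b02 + a21 * b12 + a22 * b22 + a23 * b32)
    (a20 * b03 + a21 * b13 + a22 * b23 + a23 * b33)
    (a30 * b00 + a31 * b10 + a32 * b20 + a33 * b30)
    (a30 * b01 + a31 * b11 + a32 * b21 + a33 * b31)
    (a30 * b02 + a31 * b12 + a32 * b22 + a33 * b32)
    (a30 * b03 + a31 * b13 + a32 * b23 + a33 * b33).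
Proof.
by mx4_entrywise; rewrite //= !big_ord_recr big_ord0 /= !mxE /= add0r.
Qed.

End Mx4.

Section ComplexParts.
Variable R : rcfType.

Lemma complex_eq (x y : R[i]) :
  complex.Re x = complex.Re y -> complex.Im x = complex.Im y -> x = y.
Proof. by case: x; case: y => /= a b c d -> ->. Qed.

Lemma natrC n : (n%:R : R[i]) = (n%:R : R)%:C.
Proof. by rewrite rmorph_nat. Qed.

Lemma sqr_add_sqr_neq0 (a b : R) : a +i* b != 0 -> a ^+ 2 + b ^+ 2 != 0.
Proof.
apply: contra; rewrite paddr_eq0 ?sqr_ge0 // !sqrf_eq0.
by move=> /andP[/eqP-> /eqP->].
Qed.

End ComplexParts.

Section Similarity.
Context {R : realType} (t1 m1 m3 m4 : R).
Hypothesis sqr_neq0 : m3 ^+ 2 + m4 ^+ 2 != 0.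

Let k := (m3 ^+ 2 + m4 ^+ 2)^-1.

Definition simmx : 'M[R[i]]_4 := mx4 0
  1 ((m1 * m3 * k) +i* (- (m1 * m4 * k))) 0 (- (m1 * k / 2%:R))%:C
  0 1 0 ((- (m3 * k)) +i* (- (m4 * k)))
  0 ((- (2%:R * m4 * k)) +i* (- (2%:R * m3 * k))) 1 (0 +i* k)
  0 0 0 1.

Definition simmx_inv : 'M[R[i]]_4 := mx4 0
  1 ((- (m1 * m3 * k)) +i* (m1 * m4 * k)) 0 (- (m1 * k / 2%:R))%:C
  0 1 0 ((m3 * k) +i* (m4 * k))
  0 ((2%:R * m4 * k) +i* (2%:R * m3 * k)) 1 (0 +i* k)
  0 0 0 1.

Definition coord_star (j l : 'I_5) : R :=
  nth 0 (nth [::] [:: [:: 1; 0; 0; 0; 0];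
                     [:: 0; 1; 0; 0; 0];
                     [:: 0; m1 * m4 * k; m3; - m4; 2%:R * m4 * k];
                     [:: 0; - (m1 * m3 * k); m4; m3; - (2%:R * m3 * k)];
                     [:: 0; 0; 0; 0; 1]] j) l.

Definition coord_gens (l j : 'I_5) : R :=
  nth 0 (nth [::] [:: [:: 1; 0; 0; 0; 0];
                     [:: 0; 1; 0; 0; 0];
                     [:: 0; 0; k * m3; k * m4; 0];
                     [:: 0; m1 * k; - (k * m4); k * m3; 2%:R * k];
                     [:: 0; 0; 0; 0; 1]] l) j.

(* Reduces an identity between products of explicit 4x4 matrices to 32 real
   field identities, one per real and imaginary part of each entry. *)
Local Ltac mx4_field :=
  rewrite ?big_ord_recr ?big_ord0 /=;
  rewrite /coord_star /coord_gens /gens /gens_star /E1 /E2 /E3 /E4 /E5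
    /E1s /E2s /E3s /E4s /E5s /simmx /simmx_inv /=;
  rewrite ?(mx4_0 0) ?(mx4_1 0) ?mx4_scale ?mx4_add ?mx4_mul ?natrC -?complexr0;
  congr mx4; apply: complex_eq; cbn; rewrite /k; field; by [].

Lemma simmx_invK : simmx_inv *m simmx = 1%:M.
Proof. mx4_field. Qed.

Lemma gens_simmx j :
  gens t1 m1 m3 m4 j *m simmx
  = simmx *m \sum_(l < 5) (coord_star j l)%:C *: gens_star t1 m1 m3 m4 l.
Proof. by case: j => [[|[|[|[|[|?]]]]] ?] //; mx4_field. Qed.

Lemma gens_star_simmx_inv l :
  gens_star t1 m1 m3 m4 l *m simmx_inv
  = simmx_inv *m \sum_(j < 5) (coord_gens l j)%:C *: gens t1 m1 m3 m4 j.
Proof. by case: l => [[|[|[|[|[|?]]]]] ?] //; mx4_field. Qed.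

End Similarity.

Theorem proposition4p1 (R : realType) (t1 m1 m3 m4 : R) :
  (m3 +i* m4 : R[i]) != 0 ->
  exists C : 'M[R[i]]_4, C \in unitmx /\
    forall A : 'M[R[i]]_4,
      lie_g t1 m1 m3 m4 A <-> lie_g_star t1 m1 m3 m4 (invmx C *m A *m C).
Proof.
move=> /sqr_add_sqr_neq0 sqr_neq0.
have invK := simmx_invK m1 m3 m4 sqr_neq0.
have [_ unitC] := mulmx1_unit invK.
exists (simmx m1 m3 m4); split => // A.
have -> : invmx (simmx m1 m3 m4) = simmx_inv m1 m3 m4.
  by rewrite -[invmx _]mul1mx -invK mulmxK.
exact: (real_span_similar invK (gens_simmx t1 m1 m3 m4 sqr_neq0)
                             (gens_star_simmx_inv t1 m1 m3 m4 sqr_neq0) A).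
Qed.
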